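(* The category of cubes $\widehat{\square}$ of all adjacency-preserving maps is the unique shell-complete category of cubes.
   Context: $[0]=\{()\}$, $[n]=\{0,1\}^n$ ($n\ge1$) with the product order; ${\rm PoSet}$ is the category of posets with strictly increasing maps. Face maps $\delta_i^\alpha:[n-1]\to[n]$ insert $\alpha\in\{0,1\}$ at position $i$; $\square$ is the subcategory of ${\rm PoSet}$ with objects $[n]$, $n\ge0$, generated by the face maps. With $d(\epsilon,\epsilon')=\sum_i|\epsilon_i-\epsilon'_i|$, a map $f:[m]\to[n]$ is adjacency-preserving if strictly increasing and $d(x,y)=1\Rightarrow d(f(x),f(y))=1$. A category of cubes is a subcategory $\mathcal A\subset{\rm PoSet}$ with objects $\{[n]:n\ge0\}$, containing $\square$, whose morphisms are all adjacency-preserving; $\widehat\square$ consists of all adjacency-preserving maps. An $\mathcal A$-set is a presheaf on $\mathcal A$; $\mathcal A[p]=\mathcal A(-,[p])$; $K_{\le1}$ denotes truncation to dimensions $\le 1$ (a presheaf on the full subcategory on $[0],[1]$). $\mathrm{cosk}_1^{\mathcal A}$ is the right adjoint of the truncation functor $K\mapsto K_{\le1}$ from $\mathcal A$-sets to $1$-dimensional $\mathcal A$-sets. $\mathcal A$ is shell-complete if for every $p\ge2$ the canonical map $\mathcal A[p]\to\mathrm{cosk}_1^{\mathcal A}(\mathcal A[p]_{\le1})$ (adjoint to the identity of $\mathcal A[p]_{\le1}$) is an isomorphism. *)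

From mathcomp Require Import all_boot.
Set Implicit Arguments. Unset Strict Implicit. Unset Printing Implicit Defensive.

(* The poset [n] = {0,1}^n; [0] is the one-point poset (unique function 'I_0 -> bool). *)
Definition cube (n : nat) : finType := {ffun 'I_n -> bool}.

(* maps [m] -> [n] (as finite functions, so equality is extensional) *)
Definition hom (m n : nat) : finType := {ffun cube m -> cube n}.

Definition comp (l m n : nat) (g : hom m n) (f : hom l m) : hom l n :=
  [ffun x => g (f x)].

Definition idh (n : nat) : hom n n := [ffun x => x].

Definition face (n : nat) (i : 'I_n.+1) (a : bool) : hom n n.+1 :=
  [ffun x : cube n => [ffun j : 'I_n.+1 =>
      if unlift i j is Some k then x k else a]].

Inductive boxmap : forall m n : nat, hom m n -> Prop :=
| box_id n : @boxmap n n (idh n)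
| box_face n i a : @boxmap n n.+1 (face i a)
| box_comp l m n (g : hom m n) (f : hom l m) :
    boxmap g -> boxmap f -> boxmap (comp g f).

Definition cube_le n (x y : cube n) : bool := [forall i, x i <= y i].
Definition cube_lt n (x y : cube n) : bool := cube_le x y && (x != y).

Definition strictly_increasing m n (f : hom m n) : Prop :=
  forall x y, cube_lt x y -> cube_lt (f x) (f y).

Definition cdist n (x y : cube n) : nat := \sum_(i < n) (x i != y i).

Definition adj_preserving m n (f : hom m n) : Prop :=
  strictly_increasing f /\
  forall x y, cdist x y = 1 -> cdist (f x) (f y) = 1.

Definition homset := forall m n : nat, hom m n -> Prop.

Definition is_cat_of_cubes (A : homset) : Prop :=
  [/\ (forall n, A n n (idh n)),
      (forall l m n (g : hom m n) (f : hom l m),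
          A m n g -> A l m f -> A l n (comp g f)),
      (forall m n (f : hom m n), boxmap f -> A m n f) &
      (forall m n (f : hom m n), A m n f -> adj_preserving f)].

Definition hatbox : homset := fun m n (f : hom m n) => adj_preserving f.
Arguments hatbox : clear implicits.

(* natural transformations  A[n]_{<=1} -> A[p]_{<=1}  of presheaves on the
   full subcategory of A on [0],[1]; only the values on A-maps matter *)
Definition trunc_nat (A : homset) (n p : nat)
    (phi : forall k, hom k n -> hom k p) : Prop :=
  (forall k (g : hom k n), k <= 1 -> A k n g -> A k p (phi k g)) /\
  (forall k l (h : hom k l) (g : hom l n), k <= 1 -> l <= 1 ->
      A k l h -> A l n g -> phi k (comp g h) = comp (phi l g) h).

(* cosk_1(A[p]_{<=1})_n = Nat(A[n]_{<=1}, A[p]_{<=1}); the canonical map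
   A[p] -> cosk_1(A[p]_{<=1}) sends f : [n] -> [p] to (g |-> f o g).
   Shell-completeness: for p >= 2 it is bijective at every level n. *)
Definition shell_complete (A : homset) : Prop :=
  forall p, 2 <= p -> forall n,
    (forall f f' : hom n p, A n p f -> A n p f' ->
       (forall k (g : hom k n), k <= 1 -> A k n g -> comp f g = comp f' g) ->
       f = f') /\
    (forall phi : forall k, hom k n -> hom k p, trunc_nat A phi ->
       exists2 f : hom n p, A n p f &
         forall k (g : hom k n), k <= 1 -> A k n g -> phi k g = comp f g).

From Pilot Require Import Defs.
From mathcomp Require Import all_boot.
Set Implicit Arguments. Unset Strict Implicit.

(* An adjacency-preserving map is the same as a map sending covering pairs
   (x < y at distance 1) to covering pairs, and every adjacency-preserving map
   out of [0] or [1] is a composite of faces.  Hence the truncation of any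
   category of cubes A to [0], [1] is that of the full category: its maps are
   the vertices and the covering pairs.  A natural transformation between such
   truncations is then just a vertex map sending covering pairs to covering
   pairs, i.e. an adjacency-preserving map, which gives shell-completeness of
   the full category.  Conversely, if A is shell-complete, an adjacency-
   preserving f : [m] -> [p] with p >= 2 induces such a natural transformation,
   hence is realised by a map of A; for p <= 1 there is nothing to do since
   [m] has no chain x < y < z unless m <= 1. *)

(* [all_boot] exports ssrfun's [comp], which would shadow the one of [Defs]. *)
Local Notation comp := Defs.comp.

Definition pt n (x : cube n) : hom 0 n := [ffun => x].
Definition vertex0 : cube 0 := [ffun => false].
Definition e0 : cube 1 := [ffun => false].
Definition e1 : cube 1 := [ffun => true].
Definition edge n (x y : cube n) : hom 1 n :=
  [ffun z : cube 1 => if z ord0 then y else x].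
Definition restr k n (j : 'I_n.+1) (g : hom k n.+1) : hom k n :=
  [ffun x => [ffun l => g x (lift j l)]].

Definition cube_cover n (x y : cube n) : Prop := cube_lt x y /\ cdist x y = 1.

Lemma compE l m n (g : hom m n) (f : hom l m) x : comp g f x = g (f x).
Proof. by rewrite ffunE. Qed.

Lemma ptE n (x : cube n) z : pt x z = x.
Proof. by rewrite ffunE. Qed.

Lemma edgeE n (x y : cube n) z : edge x y z = if z ord0 then y else x.
Proof. by rewrite ffunE. Qed.

Lemma e0E i : e0 i = false. Proof. by rewrite ffunE. Qed.
Lemma e1E i : e1 i = true. Proof. by rewrite ffunE. Qed.

Lemma faceE n (i : 'I_n.+1) a x j :
  face i a x j = if unlift i j is Some k then x k else a.
Proof. by rewrite !ffunE. Qed.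

Lemma restrE k n (j : 'I_n.+1) (g : hom k n.+1) x l :
  restr j g x l = g x (lift j l).
Proof. by rewrite !ffunE. Qed.

Lemma homP m n (f g : hom m n) : (forall x, f x = g x) -> f = g.
Proof. by move=> fg; apply/ffunP. Qed.

Lemma comp_assoc k l m n (h : hom m n) (g : hom l m) (f : hom k l) :
  comp h (comp g f) = comp (comp h g) f.
Proof. by apply: homP => x; rewrite !compE. Qed.

Lemma cube0_eq (a b : cube 0) : a = b.
Proof. by apply/ffunP => -[]. Qed.

Lemma cube1_cases (z : cube 1) : z = e0 \/ z = e1.
Proof.
by case hz: (z ord0); [right | left]; apply/ffunP => i;
  rewrite (ord1 i) hz ?e0E ?e1E.
Qed.

Lemma hom0_pt n (h : hom 0 n) : h = pt (h vertex0).
Proof. by apply: homP => x; rewrite ptE (cube0_eq x vertex0). Qed.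

Lemma comp_pt m n (f : hom m n) x : comp f (pt x) = pt (f x).
Proof. by apply: homP => z; rewrite compE !ptE. Qed.

Lemma pt_inj n : injective (@pt n).
Proof. by move=> x y /(congr1 (fun h : hom 0 n => h vertex0)); rewrite !ptE. Qed.

(** * The order and the distance on [n] *)

Lemma cube_le_trans n (x y z : cube n) :
  cube_le x y -> cube_le y z -> cube_le x z.
Proof.
move=> /forallP xy /forallP yz; apply/forallP => i.
exact: leq_trans (xy i) (yz i).
Qed.

Lemma cube_le_anti n (x y : cube n) : cube_le x y -> cube_le y x -> x = y.
Proof.
move=> /forallP xy /forallP yx; apply/ffunP => i.
by move: (xy i) (yx i); case: (x i); case: (y i).
Qed.

Lemma cube_lt_trans n (x y z : cube n) :
  cube_lt x y -> cube_lt y z -> cube_lt x z.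
Proof.
move=> /andP[xy x_neq_y] /andP[yz _]; rewrite /cube_lt (cube_le_trans xy yz).
apply: contra x_neq_y => /eqP zx; move: yz; rewrite -zx => yx.
by rewrite (cube_le_anti xy yx).
Qed.

Lemma cube0_lt (a b : cube 0) : ~~ cube_lt a b.
Proof. by rewrite /cube_lt (cube0_eq a b) eqxx andbF. Qed.

Lemma cube1_lt (a b : cube 1) : cube_lt a b -> a = e0 /\ b = e1.
Proof.
by case: (cube1_cases a) => ->; case: (cube1_cases b) => ->;
  rewrite /cube_lt ?eqxx ?andbF //; move=> /andP[/forallP/(_ ord0)];
  rewrite e0E e1E.
Qed.

Lemma cdist_sym n (x y : cube n) : cdist x y = cdist y x.
Proof. by apply: eq_bigr => i _; rewrite eq_sym. Qed.

Lemma cdist_eq0 n (x y : cube n) : (cdist x y == 0) = (x == y).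
Proof.
rewrite sum_nat_eq0; apply/forallP/eqP => [xy | -> i]; last by rewrite eqxx.
by apply/ffunP => i; move: (xy i); case: (x i); case: (y i).
Qed.

Lemma cdist1P n (x y : cube n) : cdist x y = 1 ->
  exists i, x i != y i /\ forall j, j != i -> x j = y j.
Proof.
move=> dxy; case: (pickP (fun i => x i != y i)) => [i xy_i | x_eq_y].
  exists i; split => // j ji.
  move: dxy; rewrite /cdist (bigD1 i) //= xy_i add1n => -[] /eqP.
  rewrite sum_nat_eq0 => /forallP /(_ j); rewrite ji /=.
  by case: (x j); case: (y j).
by move: dxy; rewrite /cdist big1 // => i _; rewrite x_eq_y.
Qed.

Lemma cdist1_lt n (x y : cube n) :
  cdist x y = 1 -> cube_lt x y \/ cube_lt y x.
Proof.
move=> /cdist1P [i [xy_i xy_j]].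
have neq_i (a b : cube n) : a i != b i -> a != b.
  by apply: contra => /eqP ->.
case hx: (x i); [right | left]; rewrite /cube_lt.
- rewrite neq_i 1?eq_sym // andbT; apply/forallP => j.
  by case: (eqVneq j i) => [-> | /xy_j ->]; rewrite ?hx ?leq_b1.
- rewrite neq_i // andbT; apply/forallP => j.
  by case: (eqVneq j i) => [-> | /xy_j ->]; rewrite ?hx.
Qed.

Lemma cdist1_cube1 (a b : cube 1) : cdist a b = (a ord0 != b ord0).
Proof. by rewrite /cdist big_ord1. Qed.

Lemma cover_e01 : cube_cover e0 e1.
Proof.
split; last by rewrite cdist1_cube1 e0E e1E.
rewrite /cube_lt; apply/andP; split; first by apply/forallP => i; rewrite e0E.
by apply/eqP => /ffunP /(_ ord0); rewrite e0E e1E.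
Qed.

(* [x'] is [x] with one coordinate where [x < y] raised to 1. *)
Lemma cube_lt_step n (x y : cube n) : cube_lt x y ->
  exists2 x', cube_cover x x' & cube_le x' y /\ (cdist x' y).+1 = cdist x y.
Proof.
move=> /andP[/forallP xy x_neq_y].
have [i xy_i] : exists i, x i != y i.
  apply/existsP; apply: contraR x_neq_y => /existsPn same.
  by apply/eqP/ffunP => i; apply/eqP; rewrite -[_ == _]negbK same.
have [x0 y1] : x i = false /\ y i = true.
  by move: (xy i) xy_i; case: (x i); case: (y i).
pose x' : cube n := [ffun j => if j == i then true else x j].
have x'E j : x' j = if j == i then true else x j by rewrite ffunE.
exists x'; first split.
- rewrite /cube_lt; apply/andP; split.
    by apply/forallP => j; rewrite x'E; case: (j == i); rewrite ?leq_b1.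
  by apply/eqP => /ffunP /(_ i); rewrite x'E eqxx x0.
- rewrite /cdist (bigD1 i) //= x'E eqxx x0 big1 // => j ji.
  by rewrite x'E (negbTE ji) eqxx.
split.
  by apply/forallP => j; rewrite x'E; case: eqP => [-> | _]; rewrite ?y1.
rewrite /cdist (bigD1 i) // [in RHS](bigD1 i) //= x'E eqxx x0 y1 /=.
by congr _.+1; apply: eq_bigr => j ji; rewrite x'E (negbTE ji).
Qed.

(** * Adjacency-preserving maps *)

Lemma covers_strictly_increasing m n (f : hom m n) :
  (forall x y, cube_cover x y -> cube_lt (f x) (f y)) -> strictly_increasing f.
Proof.
move=> f_cover x y; move dxy: (cdist x y) => d.
elim: d x dxy => [|d IH] x dxy xy.
  by move: xy; rewrite /cube_lt -cdist_eq0 dxy eqxx andbF.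
have [x' xx' [x'y dx'y]] := cube_lt_step xy.
have [<- | x'_neq_y] := eqVneq x' y; first exact: f_cover.
apply: cube_lt_trans (f_cover _ _ xx') (IH _ _ _).
  by move: dxy; rewrite -dx'y => -[].
by rewrite /cube_lt x'y x'_neq_y.
Qed.

Lemma adj_preservingP m n (f : hom m n) :
  adj_preserving f <-> forall x y, cube_cover x y -> cube_cover (f x) (f y).
Proof.
split => [[f_lt f_adj] x y [xy dxy] | f_cover]; first by split; auto.
split; first by apply: covers_strictly_increasing => x y /f_cover[].
move=> x y dxy; have [xy | yx] := cdist1_lt dxy.
  by have [] := f_cover x y (conj xy dxy).
rewrite cdist_sym in dxy; rewrite cdist_sym.
by have [] := f_cover y x (conj yx dxy).
Qed.

Lemma adj_preserving0 n (g : hom 0 n) : adj_preserving g.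
Proof. by apply/adj_preservingP => x y [xy]; move: (cube0_lt x y); rewrite xy. Qed.

Lemma adj_preserving1 n (g : hom 1 n) :
  adj_preserving g <-> cube_cover (g e0) (g e1).
Proof.
split => [/adj_preservingP g_cover | g01]; first exact: g_cover cover_e01.
by apply/adj_preservingP => x y [/cube1_lt[-> ->] _].
Qed.

Lemma edge_adj n (x y : cube n) : cube_cover x y -> adj_preserving (edge x y).
Proof. by move=> xy; apply/adj_preserving1; rewrite !edgeE e0E e1E. Qed.

Lemma adj_id n : adj_preserving (idh n).
Proof. by split => x y; rewrite !ffunE. Qed.

Lemma adj_comp l m n (g : hom m n) (f : hom l m) :
  adj_preserving g -> adj_preserving f -> adj_preserving (comp g f).
Proof.
by move=> [g_lt g_adj] [f_lt f_adj]; split => x y xy; rewrite !compE; auto.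
Qed.

Lemma face_inj n (i : 'I_n.+1) a : injective (face i a).
Proof.
move=> x y /(congr1 (fun v : cube n.+1 => v (lift i _))) lift_eq.
by apply/ffunP => k; move: (lift_eq k); rewrite !faceE liftK.
Qed.

Lemma face_le n (i : 'I_n.+1) a (x y : cube n) :
  cube_le (face i a x) (face i a y) = cube_le x y.
Proof.
apply/forallP/forallP => xy k; last by rewrite !faceE; case: unliftP.
by move: (xy (lift i k)); rewrite !faceE liftK.
Qed.

Lemma face_lt n (i : 'I_n.+1) a (x y : cube n) :
  cube_lt (face i a x) (face i a y) = cube_lt x y.
Proof. by rewrite /cube_lt face_le (inj_eq (@face_inj n i a)). Qed.

Lemma face_cdist n (i : 'I_n.+1) a (x y : cube n) :
  cdist (face i a x) (face i a y) = cdist x y.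
Proof.
rewrite /cdist (bigD1_ord i) //= !faceE unlift_none eqxx add0n.
by apply: eq_bigr => k _; rewrite !faceE liftK.
Qed.

Lemma face_cover n (i : 'I_n.+1) a (x y : cube n) :
  cube_cover (face i a x) (face i a y) <-> cube_cover x y.
Proof. by rewrite /cube_cover face_lt face_cdist. Qed.

Lemma face_adj n (i : 'I_n.+1) a : adj_preserving (face i a).
Proof. by apply/adj_preservingP => x y /face_cover. Qed.

Lemma boxmap_adj m n (f : hom m n) : boxmap f -> adj_preserving f.
Proof.
elim=> {m n f} [n | n i a | l m n g f _ g_adj _ f_adj];
  [exact: adj_id | exact: face_adj | exact: adj_comp].
Qed.

(** * Low-dimensional maps are composites of faces *)

Lemma face_restr k n (g : hom k n.+1) (j : 'I_n.+1) c :
  (forall x, g x j = c) -> g = comp (face j c) (restr j g).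
Proof.
move=> gj; apply: homP => x; apply/ffunP => l.
by rewrite compE faceE; case: unliftP => [l' -> | ->]; rewrite ?restrE.
Qed.

Lemma pt_boxmap n (g : hom 0 n) : boxmap g.
Proof.
elim: n g => [|n IH] g.
  by rewrite (_ : g = idh 0); [exact: box_id | apply: homP => x; exact: cube0_eq].
rewrite (@face_restr 0 n g ord0 (g vertex0 ord0)) => [|x].
  by apply: box_comp; [exact: box_face | exact: IH].
by rewrite (cube0_eq x vertex0).
Qed.

Lemma cover_boxmap n (g : hom 1 n) : cube_cover (g e0) (g e1) -> boxmap g.
Proof.
elim: n g => [|n IH] g [g01 dg01].
  by move: (cube0_lt (g e0) (g e1)); rewrite g01.
case: (pickP (fun j => g e0 j == g e1 j)) => [j /eqP g01_j | g01_neq].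
  have gj x : g x j = g e0 j by case: (cube1_cases x) => ->.
  have g_eq := face_restr gj; rewrite g_eq.
  apply: box_comp; first exact: box_face.
  by apply/IH/(face_cover j (g e0 j)); rewrite /cube_cover -!compE -g_eq.
have n0 : n = 0.
  move: dg01; rewrite /cdist (eq_bigr (fun=> 1)) => [|i _]; last by rewrite g01_neq.
  by rewrite sum_nat_const card_ord muln1 => -[].
subst n; have [g0 g1] := cube1_lt g01.
rewrite (_ : g = idh 1); first exact: box_id.
by apply: homP => x; rewrite ffunE; case: (cube1_cases x) => ->.
Qed.

Lemma low_adj_boxmap k n (g : hom k n) : k <= 1 -> adj_preserving g -> boxmap g.
Proof.
case: k g => [|[|//]] g _; first by move=> _; exact: pt_boxmap.
by move=> /adj_preserving1; exact: cover_boxmap.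
Qed.

Lemma hatbox_cat : is_cat_of_cubes hatbox.
Proof. by split=> //; [exact: adj_id | exact: adj_comp | exact: boxmap_adj]. Qed.

Section CatOfCubes.

Variable A : homset.
Arguments A : clear implicits.
Hypothesis A_cat : is_cat_of_cubes A.

Lemma cat_low_adj k n (g : hom k n) : k <= 1 -> adj_preserving g -> A k n g.
Proof. by case: A_cat => _ _ A_box _ k1 /(low_adj_boxmap k1); exact: A_box. Qed.

Lemma cat_pt n (x : cube n) : A 0 n (pt x).
Proof. exact/cat_low_adj/adj_preserving0. Qed.

Lemma eq_on_low_maps n p (f f' : hom n p) :
  (forall k (g : hom k n), k <= 1 -> A k n g -> comp f g = comp f' g) -> f = f'.
Proof.
move=> ff'; apply: homP => x; apply: pt_inj.
by rewrite -!comp_pt; apply: ff' (cat_pt x).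
Qed.

(* The vertex map of a natural transformation of truncations: naturality along
   the points [pt z : [0] -> [k]] forces [phi k g] to be [comp f g]. *)
Lemma trunc_nat_vertex_map n p (phi : forall k, hom k n -> hom k p) :
  trunc_nat A phi -> exists f : hom n p,
    forall k (g : hom k n), k <= 1 -> A k n g -> phi k g = comp f g.
Proof.
move=> [_ phi_nat].
exists [ffun x => phi 0 (pt x) vertex0] => k g k1 Ag; apply: homP => z.
apply: pt_inj; rewrite compE ffunE -hom0_pt -comp_pt -phi_nat //.
  by rewrite comp_pt.
exact: cat_pt.
Qed.

Lemma shell_complete_adj (A_shell : shell_complete A) m p (f : hom m p) :
  2 <= p -> adj_preserving f -> A m p f.
Proof.
case: A_cat => _ _ _ A_adj p2 f_adj.
have phi_nat : trunc_nat A (fun k (g : hom k m) => comp f g).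
  split=> [k g k1 Ag | k l h g _ _ _ _]; last exact: comp_assoc.
  exact/cat_low_adj/adj_comp/A_adj.
have [f' Af' ff'] := (A_shell p p2 m).2 _ phi_nat.
by rewrite (@eq_on_low_maps m p f f').
Qed.

End CatOfCubes.

Lemma hatbox_shell_complete : shell_complete hatbox.
Proof.
move=> p _ n; split=> [f f' _ _ | phi phi_nat].
  exact/(eq_on_low_maps hatbox_cat).
have [f phiE] := trunc_nat_vertex_map hatbox_cat phi_nat.
exists f => //; apply/adj_preservingP => x y xy.
have edge_xy := edge_adj xy.
have := phi_nat.1 1 _ isT edge_xy; rewrite phiE // => /adj_preserving1.
by rewrite !compE !edgeE e0E e1E.
Qed.

Lemma strictly_increasing_low_dim m n (f : hom m n) :
  n <= 1 -> strictly_increasing f -> m <= 1.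
Proof.
case: m f => [|[|m]] f // n1 f_lt.
pose x : cube m.+2 := [ffun => false].
pose y : cube m.+2 := [ffun j => val j == 0].
pose z : cube m.+2 := [ffun j => val j <= 1].
have xy : cube_lt x y.
  rewrite /cube_lt; apply/andP; split; first by apply/forallP => j; rewrite ffunE.
  by apply/eqP => /ffunP /(_ ord0); rewrite !ffunE.
have yz : cube_lt y z.
  rewrite /cube_lt; apply/andP; split.
    by apply/forallP => j; rewrite !ffunE; case: (val j) => [|[]].
  by apply/eqP => /ffunP /(_ (lift ord0 ord0)); rewrite !ffunE.
move: (f_lt _ _ xy) (f_lt _ _ yz).
case: n f n1 {f_lt} => [|[|//]] f _; first by rewrite (negbTE (cube0_lt _ _)).
move=> /cube1_lt[_ ->] /cube1_lt[/(congr1 (fun v : cube 1 => v ord0))].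
by rewrite e0E e1E.
Qed.

Theorem theorem7p15 :
  [/\ is_cat_of_cubes hatbox,
      shell_complete hatbox &
      forall A : homset, is_cat_of_cubes A -> shell_complete A ->
        forall m n (f : hom m n), A m n f <-> hatbox m n f].
Proof.
split; [exact: hatbox_cat | exact: hatbox_shell_complete |].
move=> A A_cat A_shell m n f; split; first by case: A_cat => _ _ _; apply.
move=> f_adj; case: (leqP 2 n) => [n2 | n1].
  exact: shell_complete_adj.
by apply: (cat_low_adj A_cat (strictly_increasing_low_dim n1 f_adj.1)).
Qed.
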